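(* For every positive integer $n$, \[ \sum_{j=1}^{n}(-1)^j\left(\binom{n}{j}-1\right)\frac{B_j}{j}=n-H_n . \]
   Context: $B_j$ is the $j$th Bernoulli number ($\frac{t}{e^t-1}=\sum_{m\ge0}B_m\frac{t^m}{m!}$, so $B_1=-1/2$). $H_n=\sum_{i=1}^n1/i$. *)

From mathcomp Require Import all_boot all_order all_algebra.
Set Implicit Arguments. Unset Strict Implicit. Unset Printing Implicit Defensive.
Import Order.TTheory GRing.Theory Num.Theory.
Local Open Scope ring_scope.

(* Bernoulli numbers B_m (convention B_1 = -1/2, i.e. t/(e^t-1) = sum B_m t^m/m!),
   defined by the equivalent standard recurrence obtained by multiplying the
   generating function by (e^t - 1)/t :
     B_0 = 1,   B_m = - 1/(m+1) * sum_{k<m} C(m+1,k) B_k   (m >= 1). *)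
Fixpoint bern_seq (m : nat) : seq rat :=
  match m with
  | 0%N => [:: 1]
  | m'.+1 =>
      let s := bern_seq m' in
      rcons s (- (m'.+2%:R)^-1 *
               \sum_(k < m'.+1) ('C(m'.+2, k))%:R * nth 0 s k)
  end.

Definition bernoulli (m : nat) : rat := nth 0 (bern_seq m) m.

Definition harmonic (n : nat) : rat := \sum_(1 <= i < n.+1) (i%:R)^-1.

From mathcomp Require Import all_boot all_order all_algebra.
From mathcomp Require Import ring zify.
Import GRing.Theory Num.Theory.
Local Open Scope ring_scope.

(* Identities between exponential generating functions are handled as
   identities between coefficient sequences under binomial convolution.  The
   recurrence defining the Bernoulli numbers says B(t) (e^t - 1) = t, hence
   B(-t) (e^(-t) - 1) = -t; multiplying by e^t and using associativity gives
   B(-t) (e^t - 1) = t e^t, i.e. sum_(k < m) C(m, k) (-1)^k B_k = m.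
   Pascal's rule C(n+1, j) - 1 = (C(n, j) - 1) + C(n, j-1) together with
   C(n, j-1) / j = C(n+1, j) / (n+1) then shows that the left-hand side S(n)
   satisfies S(n+1) = S(n) + n/(n+1), which is also the increment of n - H_n. *)

Lemma mul_bin_trinomial m i j :
  ('C(m, i + j) * 'C(i + j, i) = 'C(m, i) * 'C(m - i, j))%N.
Proof.
have [hij|hm] := leqP (i + j) m; last first.
  rewrite (bin_small hm) mul0n; have [hi|hi] := leqP i m; last by rewrite bin_small.
  by rewrite (@bin_small (m - i) j) ?muln0 //; lia.
have hi : (i <= m)%N by lia.
have hj : (j <= m - i)%N by lia.
apply/eqP; rewrite -(@eqn_pmul2r (i`! * j`! * (m - (i + j))`!)) ?muln_gt0 ?fact_gt0 //.
have e1 := bin_fact hij.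
have e2 := bin_fact (leq_addr j i); rewrite addKn in e2.
have e3 := bin_fact hi.
have e4 := bin_fact hj; rewrite -subnDA in e4.
apply/eqP; transitivity m`!; first by rewrite -e1 -e2; ring.
by rewrite -e3 -e4; ring.
Qed.

Section BinomialConvolution.

Variable R : comPzRingType.
Implicit Types a b c : nat -> R.

Definition binconv a b (m : nat) : R :=
  \sum_(k < m.+1) 'C(m, k)%:R * a k * b (m - k)%N.

Definition alt a (i : nat) : R := (-1) ^+ i * a i.

Definition egf_exp (i : nat) : R := 1.
Definition egf_expm1 (i : nat) : R := (i != 0)%:R.
Definition egf_X (i : nat) : R := (i == 1)%:R.

Lemma eq_binconv a a' b b' : a =1 a' -> b =1 b' -> binconv a b =1 binconv a' b'.
Proof. by move=> ha hb m; apply: eq_bigr => k _; rewrite ha hb. Qed.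

Lemma binconvC a b : binconv a b =1 binconv b a.
Proof.
move=> m; rewrite /binconv (reindex_inj rev_ord_inj) /=; apply: eq_bigr => k _.
have hk : (k <= m)%N by rewrite -ltnS.
by rewrite subSS subKn // bin_sub //; ring.
Qed.

Lemma binconvNl a b : binconv (fun i => - a i) b =1 (fun m => - binconv a b m).
Proof. by move=> m; rewrite /binconv -sumrN; apply: eq_bigr => k _; ring. Qed.

Lemma binconvNr a b : binconv a (fun i => - b i) =1 (fun m => - binconv a b m).
Proof. by move=> m; rewrite binconvC binconvNl binconvC. Qed.

Lemma binconv_sum_widen a b c m (k : 'I_m.+1) :
  'C(m, k)%:R * binconv a b k * c (m - k)%N =
  \sum_(i < m.+1) 'C(m, k)%:R * ('C(k, i)%:R * a i * b (k - i)%N) * c (m - k)%N.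
Proof.
rewrite /binconv mulr_sumr mulr_suml.
rewrite (big_ord_widen m.+1 (fun i => 'C(m, k)%:R * ('C(k, i)%:R * a i
  * b (k - i)%N) * c (m - k)%N)) ?ltn_ord //.
rewrite [RHS](bigID (fun i : 'I_m.+1 => (i < k.+1)%N)) /= [X in _ = _ + X]big1 ?addr0 //.
by move=> i; rewrite -leqNgt => hi; rewrite (bin_small hi) !(mul0r, mulr0).
Qed.

Lemma binconvA a b c : binconv (binconv a b) c =1 binconv a (binconv b c).
Proof.
move=> m; rewrite {1}/binconv (eq_bigr _ (fun k _ => @binconv_sum_widen a b c m k)).
rewrite exchange_big /=; apply: eq_bigr => i _; rewrite mulr_sumr.
rewrite -(big_mkord xpredT (fun k => 'C(m, k)%:R * ('C(k, i)%:R * a i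
  * b (k - i)%N) * c (m - k)%N)).
rewrite (big_cat_nat (n := i)) //= ?leq_addr; last by rewrite ltnW // ltnS -ltnS.
rewrite big_nat big1 ?add0r; last first.
  by move=> k /andP[_ hk]; rewrite (bin_small hk) !(mul0r, mulr0).
rewrite -{1}(add0n i) big_addn big_mkord.
have -> : (m.+1 - i = (m - i).+1)%N by rewrite subSn // -ltnS.
apply: eq_bigr => j _; rewrite addnK [(j + i)%N]addnC -subnDA.
have := congr1 (fun x => x%:R : R) (mul_bin_trinomial m i j); rewrite /= !natrM => E.
transitivity ('C(m, i + j)%:R * 'C(i + j, i)%:R * a i * b j * c (m - (i + j))%N);
  first ring.
by rewrite E; ring.
Qed.

Lemma binconv_alt a b m : binconv (alt a) (alt b) m = (-1) ^+ m * binconv a b m.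
Proof.
rewrite /binconv mulr_sumr; apply: eq_bigr => k _; rewrite /alt.
have hk : (k <= m)%N by rewrite -ltnS.
by rewrite -[in (-1) ^+ m](subnKC hk) exprD; ring.
Qed.

Lemma binconv_alt_expm1_exp : binconv (alt egf_expm1) egf_exp =1 (fun m => - egf_expm1 m).
Proof.
move=> m; have -> : binconv (alt egf_expm1) egf_exp m =
    \sum_(k < m.+1) 'C(m, k)%:R * (-1) ^+ k - \sum_(k < m.+1) 'C(m, k)%:R * (k == 0%N :> nat)%:R.
  rewrite -sumrB; apply: eq_bigr => -[[|k] hk] _; rewrite /alt /egf_expm1 /egf_exp /=; ring.
have binomial_alt : \sum_(k < m.+1) 'C(m, k)%:R * (-1) ^+ k = (1 + -1 : R) ^+ m.
  by rewrite exprDn; apply: eq_bigr => i _; rewrite expr1n mul1r mulr_natl.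
rewrite binomial_alt subrr big_ord_recl big1 ?bin0 ?addr0 => [|i _]; last by rewrite mulr0.
by case: m {binomial_alt} => [|m]; rewrite /egf_expm1 /= ?expr0 ?expr0n /=; ring.
Qed.

Lemma binconv_X_exp m : binconv egf_X egf_exp m = m%:R.
Proof.
case: m => [|m]; first by rewrite /binconv big_ord1 /egf_X /=; ring.
rewrite /binconv !big_ord_recl big1 => [|i _]; last by rewrite /egf_X /=; ring.
by rewrite /egf_X /egf_exp /= bin1; ring.
Qed.

End BinomialConvolution.

Arguments binconv {R}.
Arguments alt {R}.
Arguments egf_exp {R}.
Arguments egf_expm1 {R}.
Arguments egf_X {R}.

Lemma size_bern_seq m : size (bern_seq m) = m.+1.
Proof. by elim: m => [|m IH] //=; rewrite size_rcons IH. Qed.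

Lemma nth_bern_seq m k : (k <= m)%N -> nth 0 (bern_seq m) k = bernoulli k.
Proof.
elim: m => [|m IH]; first by rewrite leqn0 => /eqP ->.
rewrite leq_eqVlt => /orP[/eqP -> //|]; rewrite ltnS => hk.
by rewrite /= nth_rcons size_bern_seq ltnS hk IH.
Qed.

Lemma bernoulli0 : bernoulli 0 = 1. Proof. by []. Qed.

Lemma bernoulliS m : bernoulli m.+1 =
  - (m.+2%:R)^-1 * \sum_(k < m.+1) 'C(m.+2, k)%:R * bernoulli k.
Proof.
rewrite /bernoulli /= nth_rcons size_bern_seq ltnn eqxx.
congr (_ * _); apply: eq_bigr => k _; rewrite nth_bern_seq //.
by rewrite -ltnS.
Qed.

Lemma binconv_bernoulli_expm1 : binconv bernoulli egf_expm1 =1 egf_X.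
Proof.
case=> [|m]; first by rewrite /binconv big_ord1 /egf_expm1 /egf_X /=; ring.
rewrite /binconv big_ord_recr /= subnn /egf_expm1 /= mulr0 addr0.
under eq_bigr => k _ do rewrite subn_eq0 leqNgt (ltn_ord k) /= mulr1.
case: m => [|m]; first by rewrite big_ord1 /egf_X mulr1.
rewrite big_ord_recr /= bernoulliS binSn /egf_X /=.
have hm : (m.+2%:R : rat) != 0 by rewrite pnatr_eq0.
by rewrite mulrA mulrN mulfV // mulN1r subrr.
Qed.

Lemma binconv_alt_bernoulli_expm1 m : binconv (alt bernoulli) egf_expm1 m = m%:R.
Proof.
set lhs := binconv _ _ m; apply: oppr_inj.
have -> : - lhs = binconv (alt bernoulli) (binconv (alt egf_expm1) egf_exp) m.
  by rewrite -binconvNr; apply: eq_binconv => // i; rewrite binconv_alt_expm1_exp.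
rewrite -binconvA -binconv_X_exp -binconvNl; apply: eq_binconv => // i.
rewrite binconv_alt binconv_bernoulli_expm1 /egf_X.
by case: (i =P 1%N) => [->|_]; rewrite ?expr1 /=; ring.
Qed.

Lemma sum_bin_alt_bernoulli m :
  \sum_(k < m) 'C(m, k)%:R * ((-1) ^+ k * bernoulli k) = m%:R.
Proof.
rewrite -(binconv_alt_bernoulli_expm1 m) /binconv big_ord_recr /= subnn mulr0 addr0.
by apply: eq_bigr => k _; rewrite /egf_expm1 subn_eq0 leqNgt ltn_ord mulr1.
Qed.

Lemma sum_bin_bernoulli_div n :
  \sum_(j < n) (-1) ^+ j.+1 * 'C(n, j)%:R * (bernoulli j.+1 / j.+1%:R)
  = n%:R / n.+1%:R.
Proof.
have hn : (n.+1%:R : rat) != 0 by rewrite pnatr_eq0.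
have := sum_bin_alt_bernoulli n.+1; rewrite big_ord_recl bin0 expr0 bernoulli0 !mul1r.
rewrite -natr1 addrC => /addIr sum_alt.
rewrite -[X in _ = X / _]sum_alt mulr_suml; apply: eq_bigr => j _; rewrite !lift0.
have hj : (j.+1%:R : rat) != 0 by rewrite pnatr_eq0.
have := congr1 (fun x => x%:R : rat) (mul_bin_diag n.+1 j); rewrite /= !natrM => E.
have -> : 'C(n.+1, j.+1)%:R = n.+1%:R * 'C(n, j)%:R / j.+1%:R :> rat.
  by rewrite E mulrC mulKf.
by field; rewrite natr1 nat1r hn hj.
Qed.

Definition bernoulli_sum n : rat := \sum_(j < n)
  (-1) ^+ j.+1 * ('C(n, j.+1)%:R - 1) * (bernoulli j.+1 / j.+1%:R).

Lemma bernoulli_sumS n : bernoulli_sum n.+1 = bernoulli_sum n + n%:R / n.+1%:R.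
Proof.
rewrite /bernoulli_sum -sum_bin_bernoulli_div -big_split /= big_ord_recr /=.
rewrite binn subrr mulr0 mul0r addr0.
by apply: eq_bigr => j _; rewrite binS natrD; move: (bernoulli _ / _) => x; ring.
Qed.

Theorem mainTheorem6 (n : nat) (hn : (0 < n)%N) :
  \sum_(1 <= j < n.+1)
     (-1) ^+ j * (('C(n, j))%:R - 1) * (bernoulli j / j%:R)
  = n%:R - harmonic n :> rat.
Proof.
rewrite big_add1 /= big_mkord -/(bernoulli_sum n).
elim: n {hn} => [|n IH]; first by rewrite /bernoulli_sum big_ord0 /harmonic big_geq.
rewrite bernoulli_sumS IH /harmonic [in RHS]big_nat_recr //=.
have hn : (n.+1%:R : rat) != 0 by rewrite pnatr_eq0.
by rewrite -[in n.+1%:R - _]natr1; field; rewrite natr1.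
Qed.
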